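(* For $\ell\in\mathbb N_0$ and $z>1$ let $\phi_\ell(z)=\int_{-1}^1\frac{P_\ell(y)}{y+z}dy$. Then: (i) for every $z>1$, $\phi_1(z)<\phi_3(z)<\phi_5(z)<\dots<0$; (ii) for odd $\ell$, $z\mapsto\phi_\ell(z)$ is smooth and strictly increasing on $(1,\infty)$, and $\phi_\ell(z)=-\frac{2^{-\ell}\int_{-1}^1(1-y^2)^\ell dy}{(z-1)^{\ell+1}}(1+o(1))$ as $z\to+\infty$; (iii) for odd $\ell$, $|\phi_\ell(z)|\leqslant\frac{2^{-\ell}\int_{-1}^1(1-y^2)^\ell dy}{(z-1)^{\ell+1}}$ for all $z>1$, and $|\phi_\ell(z)|\leqslant\frac{C_\ell\,2^{-\ell}\int_{-1}^1(1-y^2)^\ell dy}{z^{\ell+1}}$ for all $z>1+m^*$, where $C_\ell=\frac{2^\ell(1+m^* )^{\ell+1}\int_{-1}^1\frac{-P_\ell(y)}{y+1+m^*}dy}{\int_{-1}^1(1-y^2)^\ell dy}$.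
   Context: $P_\ell(y)=\frac{1}{2^\ell\ell!}\frac{d^\ell}{dy^\ell}(y^2-1)^\ell$ is the $\ell$-th Legendre polynomial. $m^*>0$ is the unique root of $\Lambda(m)=1$, where $\Lambda(m)=\frac{2}{\pi}(m+1)^2\big(\frac{1}{\sqrt{m(m+2)}}-\arcsin\frac{1}{m+1}\big)$ (numerically $m^*\approx(13.607)^{-1}$). *)

From Stdlib Require Import Reals Lra List Arith Factorial ClassicalEpsilon.
Open Scope R_scope.

(* Rint f a b = RiemannInt of f on [a,b] when f is Riemann integrable there
   (the value does not depend on the integrability witness), 0 otherwise. *)
Definition Rint (f : R -> R) (a b : R) : R :=
  match excluded_middle_informative (inhabited (Riemann_integrable f a b)) with
  | left h => RiemannInt (epsilon h (fun _ => True))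
  | right _ => 0
  end.

(* [a0; a1; ...; an] represents a0 + a1 y + ... + an y^n *)
Fixpoint peval (p : list R) (y : R) : R :=
  match p with nil => 0 | a :: t => a + y * peval t y end.

Fixpoint padd (p q : list R) : list R :=
  match p, q with
  | nil, _ => q
  | _, nil => p
  | a :: p', b :: q' => (a + b) :: padd p' q'
  end.

Fixpoint pmul (p q : list R) : list R :=
  match p with
  | nil => nil
  | a :: t => padd (map (Rmult a) q) (0 :: pmul t q)
  end.

Fixpoint ppow (p : list R) (n : nat) : list R :=
  match n with O => 1 :: nil | S k => pmul p (ppow p k) end.

Fixpoint pderiv_aux (k : nat) (p : list R) : list R :=
  match p with nil => nil | a :: t => (INR k * a) :: pderiv_aux (S k) t end.

Definition pderiv (p : list R) : list R :=
  match p with nil => nil | _ :: t => pderiv_aux 1 t end.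

Definition Legendre (l : nat) (y : R) : R :=
  / (2 ^ l * INR (fact l)) *
  peval (Nat.iter l pderiv (ppow ((-1) :: 0 :: 1 :: nil) l)) y.

Definition phi (l : nat) (z : R) : R :=
  Rint (fun y => Legendre l y / (y + z)) (-1) 1.

Definition Lambda (m : R) : R :=
  2 / PI * (m + 1) ^ 2 * (1 / sqrt (m * (m + 2)) - asin (1 / (m + 1))).

(* f is C^infinity on the open interval (a, +oo): there is a sequence of
   functions, starting at f, each the derivative of the previous on (a,+oo). *)
Definition smooth_on_gt (a : R) (f : R -> R) : Prop :=
  exists D : nat -> R -> R,
    (forall z, a < z -> D O z = f z) /\
    (forall n z, a < z -> derivable_pt_lim (D n) z (D (S n) z)).

Definition Aconst (l : nat) : R :=
  / 2 ^ l * Rint (fun y => (1 - y ^ 2) ^ l) (-1) 1.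

Definition Cconst (mstar : R) (l : nat) : R :=
  2 ^ l * (1 + mstar) ^ (l + 1) *
  Rint (fun y => - Legendre l y / (y + 1 + mstar)) (-1) 1
  / Rint (fun y => (1 - y ^ 2) ^ l) (-1) 1.

(* Rodrigues' formula and [l] integrations by parts, whose boundary terms vanish because
   [(y^2 - 1)^l] has roots of order [l] at [±1], give
   [phi_l(z) = 2^-l ∫ (y^2 - 1)^l / (y + z)^(l+1) dy].  For odd [l] this is [-2^-l K(z)] with
   [K(z) = ∫ (1 - y^2)^l / (y + z)^(l+1) dy > 0], and everything follows from properties of [K]:
   [(1 - y^2) / (y + z) < 2] gives (i); differentiation under the integral sign gives
   smoothness; [∫ (1 - y^2)^l / (z ± 1)^(l+1)] bound [K(z)] from both sides, which gives the
   asymptotics and the first bound of (iii); finally [z^(l+1) K(z)] is nonincreasing, since after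
   folding [y ↦ -y] the integrand becomes [(1 - y^2)^l ((1 + y/z)^-(l+1) + (1 - y/z)^-(l+1))],
   which decreases in [z]. *)

From Coquelicot Require Import Coquelicot.
From Stdlib Require Import Reals Lra Lia List Factorial.
Open Scope R_scope.
Set Bullet Behavior "Strict Subproofs".

Lemma peval_padd p q y : peval (padd p q) y = peval p y + peval q y.
Proof.
  revert q; induction p as [|a p IH]; intros [|b q]; simpl; try ring.
  rewrite IH; ring.
Qed.

Lemma peval_map_mult a q y : peval (map (Rmult a) q) y = a * peval q y.
Proof. induction q as [|b q IH]; simpl; [ring | rewrite IH; ring]. Qed.

Lemma peval_pmul p q y : peval (pmul p q) y = peval p y * peval q y.
Proof.
  induction p as [|a p IH]; simpl; [ring |].
  rewrite peval_padd, peval_map_mult; simpl; rewrite IH; ring.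
Qed.

Lemma peval_ppow p n y : peval (ppow p n) y = peval p y ^ n.
Proof. induction n as [|n IH]; simpl; [ring | rewrite peval_pmul, IH; ring]. Qed.

Lemma peval_pderiv_aux t k y :
  peval (pderiv_aux k t) y = INR k * peval t y + y * peval (pderiv t) y.
Proof.
  revert k; induction t as [|b t IH]; intros k; simpl; [ring |].
  rewrite !IH, S_INR; simpl; ring.
Qed.

Lemma is_derive_peval p y : is_derive (peval p) y (peval (pderiv p) y).
Proof.
  induction p as [|a t IH]; simpl; [exact (is_derive_const 0 y) |].
  rewrite peval_pderiv_aux.
  replace (INR 1 * peval t y + y * peval (pderiv t) y)
    with (0 + (1 * peval t y + y * peval (pderiv t) y)) by (simpl; ring).
  apply (is_derive_plus (fun _ => a)); [exact (is_derive_const a y) |].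
  apply (is_derive_mult id); [exact (is_derive_id y) | exact IH | intros; apply Rmult_comm].
Qed.

Lemma ex_derive_peval p y : ex_derive (peval p) y.
Proof. eexists; apply is_derive_peval. Qed.

Definition sq_minus_one : list R := (-1) :: 0 :: 1 :: nil.

Definition rodrigues (l j : nat) : list R := Nat.iter j pderiv (ppow sq_minus_one l).

Lemma peval_rodrigues_0 l y : peval (rodrigues l 0) y = (y ^ 2 - 1) ^ l.
Proof. unfold rodrigues; simpl. rewrite peval_ppow; simpl; f_equal; ring. Qed.

Lemma is_derive_rodrigues l j y :
  is_derive (peval (rodrigues l j)) y (peval (rodrigues l (S j)) y).
Proof. apply is_derive_peval. Qed.

Lemma rodrigues_factor l j : (j <= l)%nat ->
  exists G, forall y, peval (rodrigues l j) y = (y ^ 2 - 1) ^ (l - j) * peval G y.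
Proof.
  induction j as [|j IH]; intros Hj.
  - exists (1 :: nil); intros y.
    rewrite peval_rodrigues_0, Nat.sub_0_r; simpl; ring.
  - destruct (IH ltac:(lia)) as [G HG].
    remember (l - S j)%nat as r eqn:Hr.
    assert (Hlj : (l - j = S r)%nat) by lia.
    exists (padd (map (Rmult (2 * INR (S r))) (pmul (0 :: 1 :: nil) G))
                 (pmul sq_minus_one (pderiv G))).
    intros y.
    assert (D : is_derive (fun y => (y ^ 2 - 1) ^ S r * peval G y) y
      (INR (S r) * (2 * y) * (y ^ 2 - 1) ^ r * peval G y
       + (y ^ 2 - 1) ^ S r * peval (pderiv G) y)).
    { apply (is_derive_mult (fun y => (y ^ 2 - 1) ^ S r)); [| apply is_derive_peval |].
      - auto_derive; auto.
        change (match r with 0%nat => 1 | S _ => INR r + 1 end) with (INR (S r)).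
        replace (y * (y * 1) + - (1)) with (y ^ 2 - 1) by ring; ring.
      - intros; apply Rmult_comm. }
    apply (is_derive_ext _ (peval (rodrigues l j))) in D.
    2:{ intros t; rewrite HG, Hlj; reflexivity. }
    rewrite <- (is_derive_unique _ _ _ (is_derive_rodrigues l j y)), (is_derive_unique _ _ _ D).
    rewrite peval_padd, peval_map_mult, !peval_pmul; simpl; ring.
Qed.

Lemma rodrigues_root l j : (j < l)%nat ->
  peval (rodrigues l j) (-1) = 0 /\ peval (rodrigues l j) 1 = 0.
Proof.
  intros Hj; destruct (rodrigues_factor l j ltac:(lia)) as [G HG].
  rewrite !HG; replace (l - j)%nat with (S (l - j - 1)) by lia.
  simpl; split; ring.
Qed.

Lemma Rint_RInt f a b : ex_RInt f a b -> Rint f a b = RInt f a b.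
Proof.
  intros H; unfold Rint.
  destruct (ClassicalEpsilon.excluded_middle_informative _) as [h | h].
  - symmetry; apply RInt_Reals.
  - exfalso; apply h; constructor; apply ex_RInt_Reals_0, H.
Qed.

Lemma ex_RInt_continuous_on (f : R -> R) a b : a <= b ->
  (forall y, a <= y <= b -> continuous f y) -> ex_RInt f a b.
Proof.
  intros Hab Hf; apply (ex_RInt_continuous (V := R_CompleteNormedModule)).
  rewrite Rmin_left, Rmax_right by lra; exact Hf.
Qed.

Lemma ex_RInt_derivable_on (f : R -> R) a b : a <= b ->
  (forall y, a <= y <= b -> ex_derive f y) -> ex_RInt f a b.
Proof.
  intros Hab Hf; apply ex_RInt_continuous_on; [exact Hab |].
  intros y Hy; apply (ex_derive_continuous f), Hf, Hy.
Qed.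

Lemma RInt_scal_R (f : R -> R) a b c : ex_RInt f a b ->
  RInt (fun y => c * f y) a b = c * RInt f a b.
Proof. exact (RInt_scal (V := R_CompleteNormedModule) f a b c). Qed.

Lemma is_derive_inv_pow m z y : y + z <> 0 ->
  is_derive (fun y => / (y + z) ^ m) y (- INR m / (y + z) ^ S m).
Proof.
  intros Hz; auto_derive; [apply pow_nonzero, Hz |].
  destruct m as [|k]; simpl; field; repeat split; try apply pow_nonzero; exact Hz.
Qed.

Lemma RInt_by_parts (f df g dg : R -> R) a b : a <= b ->
  (forall y, a <= y <= b -> is_derive f y (df y) /\ is_derive g y (dg y)) ->
  (forall y, a <= y <= b -> continuous df y /\ continuous dg y) ->
  RInt (fun y => df y * g y) a b =
  f b * g b - f a * g a - RInt (fun y => f y * dg y) a b.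
Proof.
  intros Hab Hd Hc.
  assert (Cfg : forall y, a <= y <= b -> continuous f y /\ continuous g y).
  { intros y Hy; destruct (Hd y Hy) as [Df Dg].
    split; [apply (ex_derive_continuous f) | apply (ex_derive_continuous g)];
      eexists; eassumption. }
  assert (C1 : forall y, a <= y <= b -> continuous (fun y => df y * g y) y).
  { intros y Hy; apply (continuous_mult df g); [apply Hc | apply Cfg]; exact Hy. }
  assert (C2 : forall y, a <= y <= b -> continuous (fun y => f y * dg y) y).
  { intros y Hy; apply (continuous_mult f dg); [apply Cfg | apply Hc]; exact Hy. }
  assert (H : is_RInt (fun y => df y * g y + f y * dg y) a b (f b * g b - f a * g a)).
  { apply (is_RInt_derive (fun y => f y * g y));
      rewrite Rmin_left, Rmax_right by lra; intros y Hy.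
    - apply (is_derive_mult f g); [apply Hd | apply Hd | intros; apply Rmult_comm]; exact Hy.
    - apply (continuous_plus (fun y => df y * g y) (fun y => f y * dg y)); auto. }
  apply (is_RInt_unique (V := R_CompleteNormedModule)) in H.
  rewrite (RInt_plus (V := R_CompleteNormedModule) (fun y => df y * g y)) in H
    by (apply ex_RInt_continuous_on; auto).
  change (RInt (fun y => df y * g y) a b + RInt (fun y => f y * dg y) a b
          = f b * g b - f a * g a) in H.
  lra.
Qed.

Lemma RInt_rodrigues_S l j m z : 1 < z -> (j < l)%nat ->
  RInt (fun y => peval (rodrigues l (S j)) y / (y + z) ^ m) (-1) 1 =
  INR m * RInt (fun y => peval (rodrigues l j) y / (y + z) ^ S m) (-1) 1.
Proof.
  intros Hz Hj; destruct (rodrigues_root l j Hj) as [Rm Rp]; unfold Rdiv.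
  rewrite (RInt_by_parts (peval (rodrigues l j)) _ (fun y => / (y + z) ^ m)
             (fun y => - INR m / (y + z) ^ S m)); [| lra | |].
  - rewrite Rm, Rp, (RInt_ext _ (fun y => - INR m * (peval (rodrigues l j) y * / (y + z) ^ S m))),
      RInt_scal_R.
    + rewrite !Rmult_0_l; lra.
    + apply ex_RInt_derivable_on; [lra |]; intros y Hy.
      auto_derive; repeat split; [apply ex_derive_peval | apply (pow_nonzero _ (S m)); lra].
    + intros y _; unfold Rdiv; simpl; ring.
  - intros y Hy; split; [apply is_derive_rodrigues | apply is_derive_inv_pow; lra].
  - intros y Hy; split.
    + apply (ex_derive_continuous (peval _)), ex_derive_peval.
    + apply (ex_derive_continuous (fun y => - INR m / (y + z) ^ S m)).
      auto_derive; apply (pow_nonzero _ (S m)); lra.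
Qed.

Lemma RInt_rodrigues l z : 1 < z ->
  RInt (fun y => peval (rodrigues l l) y / (y + z)) (-1) 1 =
  INR (fact l) * RInt (fun y => (y ^ 2 - 1) ^ l / (y + z) ^ S l) (-1) 1.
Proof.
  intros Hz.
  assert (Iter : forall k j, (j + k = l)%nat ->
    RInt (fun y => peval (rodrigues l l) y / (y + z) ^ 1) (-1) 1 =
    INR (fact k) * RInt (fun y => peval (rodrigues l j) y / (y + z) ^ S k) (-1) 1).
  { induction k as [|k IH]; intros j Hjk.
    - replace j with l by lia; cbn [fact INR]; symmetry; apply Rmult_1_l.
    - rewrite (IH (S j)), RInt_rodrigues_S by (auto; lia).
      rewrite fact_simpl, mult_INR, <- Rmult_assoc, (Rmult_comm (INR (fact k))).
      reflexivity. }
  rewrite (RInt_ext _ (fun y => peval (rodrigues l l) y / (y + z) ^ 1))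
    by (intros; rewrite pow_1; reflexivity).
  rewrite (Iter l 0%nat) by lia; f_equal.
  apply RInt_ext; intros y _; rewrite peval_rodrigues_0; reflexivity.
Qed.

Lemma ex_RInt_Legendre_div l z : 1 < z -> ex_RInt (fun y => Legendre l y / (y + z)) (-1) 1.
Proof.
  intros Hz; apply ex_RInt_derivable_on; [lra |]; intros y Hy.
  unfold Legendre; auto_derive; repeat split; [apply ex_derive_peval | lra].
Qed.

Lemma phi_rodrigues l z : 1 < z ->
  phi l z = / 2 ^ l * RInt (fun y => (y ^ 2 - 1) ^ l / (y + z) ^ S l) (-1) 1.
Proof.
  intros Hz; set (c := / (2 ^ l * INR (fact l))).
  assert (E : forall y, Legendre l y / (y + z) = c * (peval (rodrigues l l) y / (y + z)))
    by (intros; unfold Legendre, c, rodrigues, sq_minus_one, Rdiv; ring).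
  assert (Ex : ex_RInt (fun y => peval (rodrigues l l) y / (y + z)) (-1) 1).
  { apply ex_RInt_derivable_on; [lra |]; intros y Hy.
    auto_derive; repeat split; [apply ex_derive_peval | lra]. }
  unfold phi; rewrite Rint_RInt by (apply ex_RInt_Legendre_div, Hz).
  rewrite (RInt_ext _ _ _ _ (fun y _ => E y)), (RInt_scal_R _ _ _ _ Ex), (RInt_rodrigues l z Hz).
  unfold c; field; split; [apply pow_nonzero; lra | apply not_0_INR, fact_neq_0].
Qed.

Definition weight (l : nat) (y : R) : R := (1 - y ^ 2) ^ l.

Definition weight_int (l : nat) : R := RInt (weight l) (-1) 1.

Definition kernel (l m : nat) (z : R) : R :=
  RInt (fun y => weight l y / (y + z) ^ m) (-1) 1.

Lemma weight_pos l y : -1 < y < 1 -> 0 < weight l y.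
Proof. intros Hy; apply pow_lt; nra. Qed.

Lemma weight_opp l y : weight l (- y) = weight l y.
Proof. unfold weight; f_equal; ring. Qed.

Lemma continuous_weight_div l m z y : y + z <> 0 ->
  continuous (fun y => weight l y / (y + z) ^ m) y.
Proof.
  intros Hz; apply (ex_derive_continuous (fun y => weight l y / (y + z) ^ m)).
  unfold weight; auto_derive; apply pow_nonzero, Hz.
Qed.

Lemma ex_RInt_kernel l m z : 1 < z ->
  ex_RInt (fun y => weight l y / (y + z) ^ m) (-1) 1.
Proof.
  intros Hz; apply ex_RInt_continuous_on; [lra |].
  intros; apply continuous_weight_div; lra.
Qed.

Lemma ex_RInt_weight l : ex_RInt (weight l) (-1) 1.
Proof.
  apply ex_RInt_derivable_on; [lra |]; intros y _.
  unfold weight; auto_derive; exact I.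
Qed.

Lemma weight_int_pos l : 0 < weight_int l.
Proof.
  apply RInt_gt_0; [lra | intros; apply weight_pos; lra |].
  intros y _; apply (ex_derive_continuous (weight l)); unfold weight; auto_derive; exact I.
Qed.

Lemma Aconst_weight_int l : Aconst l = / 2 ^ l * weight_int l.
Proof. unfold Aconst; rewrite Rint_RInt; [reflexivity | apply ex_RInt_weight]. Qed.

Lemma pow_opp_odd l x : Nat.odd l = true -> (- x) ^ l = - x ^ l.
Proof.
  intros H; apply Nat.odd_spec in H; destruct H as [k ->].
  replace (- x) with (-1 * x) by ring; rewrite Rpow_mult_distr.
  replace (2 * k + 1)%nat with (S (2 * k)) by lia; rewrite pow_1_odd; ring.
Qed.

Lemma phi_odd_kernel l z : Nat.odd l = true -> 1 < z ->
  phi l z = - / 2 ^ l * kernel l (S l) z.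
Proof.
  intros Ho Hz; rewrite phi_rodrigues by exact Hz; unfold kernel.
  assert (E : forall y, (y ^ 2 - 1) ^ l / (y + z) ^ S l = -1 * (weight l y / (y + z) ^ S l)).
  { intros y; unfold weight; replace (y ^ 2 - 1) with (- (1 - y ^ 2)) by ring.
    rewrite pow_opp_odd by exact Ho; unfold Rdiv; ring. }
  rewrite (RInt_ext _ _ _ _ (fun y _ => E y)), RInt_scal_R by (apply ex_RInt_kernel, Hz).
  simpl; ring.
Qed.

Lemma kernel_pos l m z : 1 < z -> 0 < kernel l m z.
Proof.
  intros Hz; apply RInt_gt_0; [lra | | intros; apply continuous_weight_div; lra].
  intros y Hy; apply Rdiv_lt_0_compat; [apply weight_pos, Hy | apply pow_lt; lra].
Qed.

Lemma pow_lt_compat_S a b n : 0 <= a < b -> a ^ S n < b ^ S n.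
Proof.
  intros H; simpl.
  assert (a ^ n <= b ^ n) by (apply pow_incr; lra).
  assert (0 < b ^ n) by (apply pow_lt; lra).
  nra.
Qed.

Lemma kernel_decreasing l m z1 z2 : 1 < z1 -> z1 < z2 ->
  kernel l (S m) z2 < kernel l (S m) z1.
Proof.
  intros H1 H2; apply RInt_lt; [lra | intros; apply continuous_weight_div; lra
                              | intros; apply continuous_weight_div; lra |].
  intros y Hy; apply Rmult_lt_compat_l; [apply weight_pos, Hy |].
  apply Rinv_lt_contravar; [apply Rmult_lt_0_compat; apply pow_lt; lra |].
  apply pow_lt_compat_S; lra.
Qed.

Lemma kernel_SS_lt l m z : 1 < z -> kernel (S (S l)) (S (S m)) z < 4 * kernel l m z.
Proof.
  intros Hz; unfold kernel; rewrite <- RInt_scal_R by (apply ex_RInt_kernel, Hz).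
  apply RInt_lt; [lra | | intros; apply continuous_weight_div; lra |].
  - intros y Hy; apply (continuous_scal_r 4 (fun y => weight l y / (y + z) ^ m)).
    apply continuous_weight_div; lra.
  - intros y Hy.
    assert (X : 0 < weight l y / (y + z) ^ m)
      by (apply Rdiv_lt_0_compat; [apply weight_pos, Hy | apply pow_lt; lra]).
    (* [1 - y^2 = (1 - y)(1 + y) < 2 (y + z)] *)
    assert (Q : 0 < (1 - y ^ 2) / (y + z) < 2)
      by (split; [apply Rdiv_lt_0_compat | apply Rlt_div_l]; nra).
    replace (weight (S (S l)) y / (y + z) ^ S (S m))
      with (((1 - y ^ 2) / (y + z)) ^ 2 * (weight l y / (y + z) ^ m))
      by (unfold weight; simpl; field; split; [apply pow_nonzero |]; lra).
    apply Rmult_lt_compat_r; [exact X | nra].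
Qed.

Lemma kernel_le l m z : 1 < z -> kernel l m z <= weight_int l / (z - 1) ^ m.
Proof.
  intros Hz; unfold kernel, weight_int, Rdiv.
  rewrite Rmult_comm, <- RInt_scal_R by apply ex_RInt_weight.
  apply RInt_le; [lra | apply ex_RInt_kernel, Hz | |].
  - apply (ex_RInt_scal (V := R_CompleteNormedModule)), ex_RInt_weight.
  - intros y Hy; rewrite Rmult_comm; apply Rmult_le_compat_r; [left; apply weight_pos, Hy |].
    apply Rinv_le_contravar; [apply pow_lt; lra | apply pow_incr; lra].
Qed.

Lemma kernel_ge l m z : 1 < z -> weight_int l / (z + 1) ^ m <= kernel l m z.
Proof.
  intros Hz; unfold kernel, weight_int, Rdiv.
  rewrite Rmult_comm, <- RInt_scal_R by apply ex_RInt_weight.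
  apply RInt_le; [lra | | apply ex_RInt_kernel, Hz |].
  - apply (ex_RInt_scal (V := R_CompleteNormedModule)), ex_RInt_weight.
  - intros y Hy; rewrite Rmult_comm; apply Rmult_le_compat_l; [left; apply weight_pos, Hy |].
    apply Rinv_le_contravar; [apply pow_lt; lra | apply pow_incr; lra].
Qed.

Lemma RInt_even_split (f : R -> R) : (forall y, -1 <= y <= 1 -> continuous f y) ->
  RInt f (-1) 1 = RInt (fun y => f y + f (- y)) 0 1.
Proof.
  intros Hc.
  assert (Ec : forall y, 0 <= y <= 1 -> continuous (fun y => f (- y)) y).
  { intros y Hy; apply (continuous_comp Ropp f);
      [exact (continuous_opp _ y (continuous_id y)) | apply Hc; lra]. }
  assert (Refl : RInt (fun y => f (- y)) 0 1 = RInt f (-1) 0).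
  { assert (H : RInt (fun y => scal (-1) (f (- y))) 0 1 = RInt f (- 0) (- 1)).
    { apply (RInt_comp f Ropp (fun _ => -1)).
      - rewrite Rmin_left, Rmax_right by lra; intros y Hy; apply Hc; lra.
      - intros y _; split; [auto_derive; trivial; ring | apply continuous_const]. }
    replace (- 0) with 0 in H by ring.
    rewrite (RInt_scal (V := R_CompleteNormedModule)), <- (opp_RInt_swap f (-1) 0) in H.
    - change (-1 * RInt (fun y => f (- y)) 0 1 = - RInt f (-1) 0) in H.
      lra.
    - apply ex_RInt_continuous_on; [lra |]; intros; apply Hc; lra.
    - apply ex_RInt_continuous_on; [lra | exact Ec]. }
  rewrite (RInt_plus (V := R_CompleteNormedModule)), Refl,
    <- (RInt_Chasles (V := R_CompleteNormedModule) f (-1) 0 1)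
    by (apply ex_RInt_continuous_on; [lra | try exact Ec]; intros; apply Hc; lra).
  apply Rplus_comm.
Qed.

Lemma pow_sub_pow_le X1 Y1 X2 Y2 n : 0 <= Y2 <= X2 -> Y2 <= Y1 -> X2 - Y2 <= X1 - Y1 ->
  X2 ^ n - Y2 ^ n <= X1 ^ n - Y1 ^ n.
Proof.
  intros H1 H2 H3; induction n as [|n IH]; simpl; [lra |].
  assert (Y2 ^ n <= X2 ^ n) by (apply pow_incr; lra).
  assert (0 <= Y2 ^ n) by (apply pow_le; lra).
  assert (Y2 ^ n <= Y1 ^ n) by (apply pow_incr; lra).
  replace (X2 * X2 ^ n - Y2 * Y2 ^ n) with (X2 * (X2 ^ n - Y2 ^ n) + Y2 ^ n * (X2 - Y2)) by ring.
  replace (X1 * X1 ^ n - Y1 * Y1 ^ n) with (X1 * (X1 ^ n - Y1 ^ n) + Y1 ^ n * (X1 - Y1)) by ring.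
  apply Rplus_le_compat; apply Rmult_le_compat; lra.
Qed.

Lemma inv_pow_sum_le s1 s2 n : 0 <= s1 <= s2 -> s2 < 1 ->
  / (1 + s1) ^ n + / (1 - s1) ^ n <= / (1 + s2) ^ n + / (1 - s2) ^ n.
Proof.
  intros H1 H2; rewrite <- !pow_inv.
  assert (D : / (1 + s1) - / (1 + s2) <= / (1 - s2) - / (1 - s1)).
  { replace (/ (1 + s1) - / (1 + s2)) with ((s2 - s1) * / ((1 + s1) * (1 + s2))) by (field; lra).
    replace (/ (1 - s2) - / (1 - s1)) with ((s2 - s1) * / ((1 - s1) * (1 - s2))) by (field; lra).
    apply Rmult_le_compat_l; [lra |].
    apply Rinv_le_contravar; nra. }
  assert (L : 0 <= / (1 + s2) <= / (1 + s1) /\ / (1 + s2) <= / (1 - s1)).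
  { split; [split |]; [apply Rlt_le, Rinv_0_lt_compat | apply Rinv_le_contravar
                      | apply Rinv_le_contravar]; lra. }
  pose proof (pow_sub_pow_le (/ (1 - s2)) (/ (1 - s1)) (/ (1 + s1)) (/ (1 + s2)) n
                (proj1 L) (proj2 L) D).
  lra.
Qed.

Lemma kernel_scaled_even l m z : 1 < z ->
  z ^ m * kernel l m z =
  RInt (fun y => weight l y * (/ (1 + y / z) ^ m + / (1 - y / z) ^ m)) 0 1.
Proof.
  intros Hz; unfold kernel.
  rewrite RInt_even_split by (intros; apply continuous_weight_div; lra).
  rewrite <- RInt_scal_R.
  - apply RInt_ext; intros y Hy; rewrite Rmin_left, Rmax_right in Hy by lra; simpl.
    rewrite weight_opp.
    replace (1 + y / z) with ((y + z) / z) by (field; lra).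
    replace (1 - y / z) with ((- y + z) / z) by (field; lra).
    unfold Rdiv; rewrite !Rpow_mult_distr, !pow_inv.
    field; repeat split; apply pow_nonzero; lra.
  - apply ex_RInt_continuous_on; [lra |]; intros y Hy.
    apply (continuous_plus (fun y => weight l y / (y + z) ^ m)
                           (fun y => weight l (- y) / (- y + z) ^ m)).
    + apply continuous_weight_div; lra.
    + apply (ex_derive_continuous (fun y => weight l (- y) / (- y + z) ^ m)).
      unfold weight; auto_derive; apply pow_nonzero; lra.
Qed.

Lemma kernel_scaled_antitone l m w z : 1 < w -> w < z ->
  z ^ m * kernel l m z <= w ^ m * kernel l m w.
Proof.
  intros Hw Hz; rewrite !kernel_scaled_even by lra.
  assert (Ratio : forall u y, 1 < u -> 0 <= y <= 1 -> 0 <= y / u < 1)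
    by (intros u y Hu Hy; split; [apply Rdiv_le_0_compat | apply Rlt_div_l]; lra).
  assert (Ex : forall u, 1 < u ->
    ex_RInt (fun y => weight l y * (/ (1 + y / u) ^ m + / (1 - y / u) ^ m)) 0 1).
  { intros u Hu; apply ex_RInt_derivable_on; [lra |]; intros y Hy.
    destruct (Ratio u y Hu Hy).
    unfold weight; auto_derive; repeat split; apply pow_nonzero; lra. }
  apply RInt_le; [lra | apply Ex; lra | apply Ex; lra |].
  intros y Hy; apply Rmult_le_compat_l; [left; apply weight_pos; lra |].
  apply inv_pow_sum_le; [| apply Ratio; lra].
  split; [apply Ratio; lra |].
  apply Rmult_le_compat_l; [lra | apply Rinv_le_contravar; lra].
Qed.

Lemma is_derive_weight_div_shift l m y u : 0 < y + u ->
  is_derive (fun u => weight l y / (y + u) ^ m) u (- INR m * (weight l y / (y + u) ^ S m)).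
Proof.
  intros H; apply (is_derive_ext (fun u => weight l y * / (u + y) ^ m)).
  - intros t; rewrite Rplus_comm; reflexivity.
  - replace (- INR m * (weight l y / (y + u) ^ S m))
      with (weight l y * (- INR m / (u + y) ^ S m)) by (rewrite Rplus_comm; unfold Rdiv; ring).
    apply (is_derive_scal (fun u => / (u + y) ^ m)), is_derive_inv_pow; lra.
Qed.

Lemma continuity_2d_weight_div l m u y : y + u <> 0 ->
  continuity_2d_pt (fun u y => - INR m * (weight l y / (y + u) ^ S m)) u y.
Proof.
  intros H; apply continuity_2d_pt_mult; [apply continuity_2d_pt_const |].
  apply continuity_2d_pt_mult.
  - apply (continuity_1d_2d_pt_comp (weight l) (fun u y => y)); [| apply continuity_2d_pt_id2].
    apply continuity_pt_filterlim, (ex_derive_continuous (weight l)).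
    unfold weight; auto_derive; exact I.
  - apply continuity_2d_pt_inv; [| apply pow_nonzero, H].
    apply (continuity_1d_2d_pt_comp (fun w => w ^ S m) (fun u y => y + u)).
    + apply derivable_continuous_pt, derivable_pt_pow.
    + apply continuity_2d_pt_plus; [apply continuity_2d_pt_id2 | apply continuity_2d_pt_id1].
Qed.

Lemma is_derive_kernel l m z : 1 < z ->
  is_derive (kernel l m) z (- INR m * kernel l (S m) z).
Proof.
  intros Hz; unfold kernel.
  assert (Near : locally z (fun u => 1 < u)) by exact (open_gt 1 z Hz).
  assert (P := is_derive_RInt_param (fun u y => weight l y / (y + u) ^ m) (-1) 1 z).
  rewrite Rmin_left, Rmax_right in P by lra.
  replace (- INR m * RInt (fun y => weight l y / (y + z) ^ S m) (-1) 1)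
    with (RInt (fun y => Derive (fun u => weight l y / (y + u) ^ m) z) (-1) 1).
  - apply P.
    + apply (filter_imp (fun u => 1 < u)); [| exact Near].
      intros u Hu y Hy; eexists; apply is_derive_weight_div_shift; lra.
    + intros y Hy.
      apply (continuity_2d_pt_ext_loc (fun u y => - INR m * (weight l y / (y + u) ^ S m))).
      * assert (Hd : 0 < (z - 1) / 2) by lra.
        exists (mkposreal _ Hd); simpl; intros u t Hu Ht.
        apply Rabs_lt_between' in Hu; apply Rabs_lt_between' in Ht.
        symmetry; apply is_derive_unique, is_derive_weight_div_shift; lra.
      * apply continuity_2d_weight_div; lra.
    + apply (filter_imp (fun u => 1 < u)); [| exact Near].
      intros u Hu; apply ex_RInt_kernel, Hu.
  - rewrite <- RInt_scal_R by (apply ex_RInt_kernel, Hz).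
    apply RInt_ext; intros y Hy; rewrite Rmin_left, Rmax_right in Hy by lra.
    apply is_derive_unique, is_derive_weight_div_shift; lra.
Qed.

(* [kernel_derivs l c m n] is the [n]-th derivative of [c * kernel l m]. *)
Fixpoint kernel_derivs (l : nat) (c : R) (m n : nat) : R -> R :=
  match n with
  | O => fun z => c * kernel l m z
  | S n => kernel_derivs l (c * - INR m) (S m) n
  end.

Lemma kernel_derivs_S l c m n z : 1 < z ->
  derivable_pt_lim (kernel_derivs l c m n) z (kernel_derivs l c m (S n) z).
Proof.
  intros Hz; revert c m; induction n as [|n IH]; intros c m.
  - apply is_derive_Reals; simpl; rewrite Rmult_assoc.
    apply (is_derive_scal (kernel l m)), is_derive_kernel, Hz.
  - exact (IH (c * - INR m) (S m)).
Qed.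

Lemma pow_ge_Bernoulli q n : 0 <= q <= 1 -> 1 - INR n * (1 - q) <= q ^ n.
Proof.
  intros Hq; induction n as [|n IH]; [simpl; lra |].
  assert (q ^ n <= 1) by (rewrite <- (pow1 n); apply pow_incr; lra).
  rewrite S_INR; simpl; nra.
Qed.

Lemma kernel_equiv l m eps : 0 < eps -> exists M, forall z, M < z ->
  Rabs (kernel l m z * (z - 1) ^ m / weight_int l - 1) < eps.
Proof.
  intros He; exists (2 * INR m / eps + 1); intros z Hz.
  assert (Hm : 0 <= INR m) by apply pos_INR.
  assert (Hz1 : 1 < z) by (assert (0 <= 2 * INR m / eps) by (apply Rdiv_le_0_compat; lra); lra).
  assert (HI := weight_int_pos l).
  assert (Hp : 0 < (z - 1) ^ m) by (apply pow_lt; lra).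
  assert (Hq : 0 < (z + 1) ^ m) by (apply pow_lt; lra).
  set (r := kernel l m z * (z - 1) ^ m / weight_int l).
  assert (Up : r <= 1).
  { apply (Rmult_le_reg_r (weight_int l / (z - 1) ^ m)); [apply Rdiv_lt_0_compat; lra |].
    replace (r * (weight_int l / (z - 1) ^ m)) with (kernel l m z) by (unfold r; field; lra).
    rewrite Rmult_1_l; apply kernel_le, Hz1. }
  set (q := (z - 1) / (z + 1)).
  assert (Low : q ^ m <= r).
  { apply (Rmult_le_reg_r (weight_int l / (z - 1) ^ m)); [apply Rdiv_lt_0_compat; lra |].
    replace (r * (weight_int l / (z - 1) ^ m)) with (kernel l m z) by (unfold r; field; lra).
    replace (q ^ m * (weight_int l / (z - 1) ^ m)) with (weight_int l / (z + 1) ^ m)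
      by (unfold q, Rdiv; rewrite Rpow_mult_distr, pow_inv; field; lra).
    apply kernel_ge, Hz1. }
  assert (B : 1 - INR m * (2 / (z + 1)) <= q ^ m).
  { replace (2 / (z + 1)) with (1 - q) by (unfold q; field; lra).
    apply pow_ge_Bernoulli; unfold q; split.
    - apply Rdiv_le_0_compat; lra.
    - apply Rle_div_l; lra. }
  assert (Small : INR m * (2 / (z + 1)) < eps).
  { apply (Rmult_lt_reg_r (z + 1)); [lra |].
    replace (INR m * (2 / (z + 1)) * (z + 1)) with (2 * INR m) by (field; lra).
    assert (2 * INR m / eps * eps = 2 * INR m) by (field; lra).
    nra. }
  rewrite Rabs_left1; lra.
Qed.

Lemma phi_odd_neg l z : Nat.odd l = true -> 1 < z -> phi l z < 0.
Proof.
  intros Ho Hz; rewrite phi_odd_kernel by assumption.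
  assert (0 < / 2 ^ l * kernel l (S l) z)
    by (apply Rmult_lt_0_compat; [apply Rinv_0_lt_compat, pow_lt; lra | apply kernel_pos, Hz]).
  lra.
Qed.

Lemma Rabs_phi_odd l z : Nat.odd l = true -> 1 < z ->
  Rabs (phi l z) = / 2 ^ l * kernel l (S l) z.
Proof.
  intros Ho Hz; rewrite Rabs_left by (apply phi_odd_neg; assumption).
  rewrite phi_odd_kernel by assumption; ring.
Qed.

Lemma phi_odd_lt_SS l z : Nat.odd l = true -> 1 < z -> phi l z < phi (S (S l)) z.
Proof.
  intros Ho Hz; rewrite !phi_odd_kernel by (simpl; assumption || lra).
  assert (H := kernel_SS_lt l (S l) z Hz).
  assert (Hp : 0 < 2 ^ l) by (apply pow_lt; lra).
  replace (- / 2 ^ S (S l) * kernel (S (S l)) (S (S (S l))) z)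
    with (- / 2 ^ l * (kernel (S (S l)) (S (S (S l))) z / 4)) by (simpl; field; lra).
  assert (Hi : 0 < / 2 ^ l) by (apply Rinv_0_lt_compat, Hp).
  assert (/ 2 ^ l * (kernel (S (S l)) (S (S (S l))) z / 4) < / 2 ^ l * kernel l (S l) z)
    by (apply Rmult_lt_compat_l; lra).
  lra.
Qed.

Lemma phi_odd_increasing l z1 z2 : Nat.odd l = true -> 1 < z1 -> z1 < z2 -> phi l z1 < phi l z2.
Proof.
  intros Ho H1 H2; rewrite !phi_odd_kernel by (assumption || lra).
  assert (Hi : 0 < / 2 ^ l) by (apply Rinv_0_lt_compat, pow_lt; lra).
  assert (/ 2 ^ l * kernel l (S l) z2 < / 2 ^ l * kernel l (S l) z1)
    by (apply Rmult_lt_compat_l; [exact Hi | apply kernel_decreasing; assumption]).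
  lra.
Qed.

Lemma phi_odd_smooth l : Nat.odd l = true -> smooth_on_gt 1 (phi l).
Proof.
  intros Ho; exists (kernel_derivs l (- / 2 ^ l) (S l)); split.
  - intros z Hz; symmetry; apply phi_odd_kernel; assumption.
  - intros n z Hz; apply kernel_derivs_S, Hz.
Qed.

Lemma phi_odd_equiv l eps : Nat.odd l = true -> 0 < eps -> exists M, forall z, M < z ->
  Rabs (phi l z / (- Aconst l / (z - 1) ^ S l) - 1) < eps.
Proof.
  intros Ho He; destruct (kernel_equiv l (S l) eps He) as [M HM].
  exists (Rmax M 1); intros z Hz.
  assert (Hz1 : 1 < z) by (eapply Rle_lt_trans; [apply Rmax_r | exact Hz]).
  replace (phi l z / (- Aconst l / (z - 1) ^ S l))
    with (kernel l (S l) z * (z - 1) ^ S l / weight_int l).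
  - apply HM; eapply Rle_lt_trans; [apply Rmax_l | exact Hz].
  - assert (0 < weight_int l) by apply weight_int_pos.
    rewrite phi_odd_kernel, Aconst_weight_int by assumption.
    field; split; [apply pow_nonzero; lra | split; [apply pow_nonzero |]; lra].
Qed.

Lemma phi_odd_abs_le l z : Nat.odd l = true -> 1 < z ->
  Rabs (phi l z) <= Aconst l / (z - 1) ^ S l.
Proof.
  intros Ho Hz; rewrite Rabs_phi_odd, Aconst_weight_int by assumption.
  unfold Rdiv; rewrite Rmult_assoc; apply Rmult_le_compat_l.
  - apply Rlt_le, Rinv_0_lt_compat, pow_lt; lra.
  - apply kernel_le, Hz.
Qed.

Lemma Rint_opp_Legendre_div l m : 0 < m ->
  Rint (fun y => - Legendre l y / (y + 1 + m)) (-1) 1 = - phi l (1 + m).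
Proof.
  intros Hm; unfold phi.
  assert (Ex := ex_RInt_Legendre_div l (1 + m) ltac:(lra)).
  assert (E : forall y, - Legendre l y / (y + 1 + m) = -1 * (Legendre l y / (y + (1 + m))))
    by (intros; rewrite Rplus_assoc; unfold Rdiv; ring).
  rewrite !Rint_RInt.
  - rewrite (RInt_ext _ _ _ _ (fun y _ => E y)), RInt_scal_R by exact Ex.
    simpl; ring.
  - exact Ex.
  - apply (ex_RInt_ext _ _ _ _ (fun y _ => eq_sym (E y))).
    apply (ex_RInt_scal (V := R_CompleteNormedModule)), Ex.
Qed.

Lemma phi_odd_abs_le_scaled m l z : 0 < m -> Nat.odd l = true -> 1 + m < z ->
  Rabs (phi l z) <= Cconst m l * Aconst l / z ^ S l.
Proof.
  intros Hm Ho Hz.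
  assert (HI := weight_int_pos l).
  assert (Hp : 0 < 2 ^ l) by (apply pow_lt; lra).
  assert (Hz0 : 0 < z ^ S l) by (apply pow_lt; lra).
  assert (E : Cconst m l * Aconst l = / 2 ^ l * ((1 + m) ^ S l * kernel l (S l) (1 + m))).
  { unfold Cconst; rewrite Rint_opp_Legendre_div, Rint_RInt, Nat.add_1_r, Aconst_weight_int
      by (apply ex_RInt_weight || assumption).
    rewrite phi_odd_kernel by (assumption || lra).
    change (RInt (fun y => (1 - y ^ 2) ^ l) (-1) 1) with (weight_int l); field; lra. }
  rewrite E, Rabs_phi_odd by (assumption || lra).
  apply (Rmult_le_reg_r (z ^ S l)); [exact Hz0 |].
  replace (/ 2 ^ l * ((1 + m) ^ S l * kernel l (S l) (1 + m)) / z ^ S l * z ^ S l)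
    with (/ 2 ^ l * ((1 + m) ^ S l * kernel l (S l) (1 + m))) by (field; lra).
  rewrite Rmult_assoc, (Rmult_comm (kernel l (S l) z)).
  apply Rmult_le_compat_l; [apply Rlt_le, Rinv_0_lt_compat, Hp |].
  apply kernel_scaled_antitone; lra.
Qed.

Theorem lemma9p3 (mstar : R) (Hm : 0 < mstar) (HL : Lambda mstar = 1) :
  (* (i) *)
  (forall z, 1 < z ->
     (forall k : nat, phi (2 * k + 1) z < phi (2 * k + 3) z) /\
     (forall k : nat, phi (2 * k + 1) z < 0)) /\
  (* (ii) *)
  (forall l : nat, Nat.odd l = true ->
     smooth_on_gt 1 (phi l) /\
     (forall z1 z2, 1 < z1 -> z1 < z2 -> phi l z1 < phi l z2) /\
     (forall eps, 0 < eps -> exists M, forall z, M < z ->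
        Rabs (phi l z / (- Aconst l / (z - 1) ^ (l + 1)) - 1) < eps)) /\
  (* (iii) *)
  (forall l : nat, Nat.odd l = true ->
     (forall z, 1 < z -> Rabs (phi l z) <= Aconst l / (z - 1) ^ (l + 1)) /\
     (forall z, 1 + mstar < z ->
        Rabs (phi l z) <= Cconst mstar l * Aconst l / z ^ (l + 1))).
Proof.
  assert (Odd : forall k, Nat.odd (2 * k + 1) = true)
    by (intros k; apply Nat.odd_spec; exists k; reflexivity).
  split; [| split].
  - intros z Hz; split; intros k.
    + replace (2 * k + 3)%nat with (S (S (2 * k + 1))) by lia.
      apply phi_odd_lt_SS; [apply Odd | exact Hz].
    + apply phi_odd_neg; [apply Odd | exact Hz].
  - intros l Ho; rewrite Nat.add_1_r; split; [| split].
    + apply phi_odd_smooth, Ho.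
    + intros z1 z2; apply phi_odd_increasing, Ho.
    + intros eps; apply phi_odd_equiv, Ho.
  - intros l Ho; rewrite Nat.add_1_r; split; intros z Hz.
    + apply phi_odd_abs_le; assumption.
    + apply phi_odd_abs_le_scaled; assumption.
Qed.
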